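(* Let $Z$ be a decision structure and $H$ a module of $Z$. Let $Z/H$ be the module contraction of $H$ in $Z$, in which the node $H$ is labelled by the derived action $(H_B,H_R)$ of the decision structure $Z[H]$ and each node $\{v\}$, $v\notin H$, is labelled by the action labelling $v$ in $Z$. Then $Z_B=(Z/H)_B$, i.e. $Z(w)_B(w)=(Z/H)(w)_B(w)$ for every state $w$.
   Context: Fix sets $\mathbb{W}$ (states), $\mathbb{S}$ (signals), $\mathcal{R}$ (return values). An action is a pair $\alpha=(\alpha_B,\alpha_R)$ with $\alpha_B:\mathbb{W}\to\mathbb{S}$, $\alpha_R:\mathbb{W}\to\mathcal{R}$. A decision structure is a finite directed acyclic graph $Z=(N,A)$, $A\subseteq N\times N$, with a unique source, an arc labelling $\ell:A\to\mathcal{R}$ and a node labelling $\eta$ by actions, such that distinct arcs leaving the same node have distinct labels; the arc out of $v$ labelled $r$, if it exists, is the $r$-arc out of $v$. For a state $w$, $Z(w)$ is computed by starting at the source and, at node $v$ with $\eta(v)=\alpha$, moving along the $\alpha_R(w)$-arc if it exists and otherwise outputting $\alpha$. The derived action of $Z$ is $(Z_B,Z_R)$ with $Z_B(w)=Z(w)_B(w)$ and $Z_R(w)=Z(w)_R(w)$. For $X\subseteq N$, $Z[X]$ is the induced subgraph with inherited labels. $X\subseteq N(Z)$ is a module if $Z[X]$ has a unique source and for every $v\notin X$: (i) every arc from $v$ into $X$ ends at the source of $Z[X]$; (ii) if some $x\in X$ has an $r$-labelled arc to $v$, then every $x'\in X$ has an $r$-arc ending at $v$ or in $X$. For a module $H$,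 the module contraction $Z/H$ is the graph with node set $\{H\}\cup\{\{v\}:v\notin H\}$ and an arc $(S,T)$, $S\ne T$, labelled $r$ whenever some $r$-labelled arc of $Z$ goes from a node of $S$ to a node of $T$ (this is a decision structure). *)

From mathcomp Require Import all_boot.
Set Implicit Arguments. Unset Strict Implicit. Unset Printing Implicit Defensive.

Section DecisionStructures.
Variables (W Sig : Type) (R : eqType).

(* An action alpha = (alpha_B, alpha_R). *)
Definition action := ((W -> Sig) * (W -> R))%type.

(* A (candidate) decision structure on a finite ambient node type V:
   node set [nodes], labelled arcs [arc u v r] = "there is an r-labelled arc
   from u to v", node labelling [eta]. *)
Record ds (V : finType) := DS {
  nodes : {set V};
  arc : V -> V -> R -> bool;
  eta : V -> action
}.

Variable V : finType.
Implicit Types (Z : ds V) (X : {set V}).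

Inductive reach Z : V -> V -> Prop :=
| reach_one u v r : arc Z u v r -> reach Z u v
| reach_step u v x r : arc Z u v r -> reach Z v x -> reach Z u x.

Definition is_source Z (s : V) : Prop :=
  s \in nodes Z /\ (forall u r, ~~ arc Z u s r).

(* Decision structure: finite DAG (A ⊆ N × N with an arc labelling, i.e. at
   most one label per ordered pair), unique source, and distinct arcs leaving
   the same node carry distinct labels. *)
Definition is_ds Z : Prop :=
  [/\ (forall u v r, arc Z u v r -> u \in nodes Z /\ v \in nodes Z),
      (forall v, ~ reach Z v v),
      (exists! s, is_source Z s),
      (forall u v r r', arc Z u v r -> arc Z u v r' -> r = r') &
      (forall u v v' r, arc Z u v r -> arc Z u v' r -> v = v')].

(* Evaluation Z(w) from a start node: follow the alpha_R(w)-arc while it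
   exists; fuel #|V| suffices on a DAG whose nodes lie in V. *)
Definition next Z (v : V) (w : W) : option V :=
  [pick u | arc Z v u ((eta Z v).2 w)].

Fixpoint run Z (n : nat) (v : V) (w : W) : action :=
  match n with
  | 0 => eta Z v
  | n'.+1 => match next Z v w with
             | Some u => run Z n' u w
             | None => eta Z v
             end
  end.

(* Z(w), computed from the source s of Z. *)
Definition out Z (s : V) (w : W) : action := run Z #|V| s w.

Definition derivedB Z s : W -> Sig := fun w => (out Z s w).1 w.
Definition derivedR Z s : W -> R := fun w => (out Z s w).2 w.
Definition derived Z s : action := (derivedB Z s, derivedR Z s).

Definition induced Z X : ds V :=
  DS (nodes Z :&: X) (fun u v r => [&& u \in X, v \in X & arc Z u v r]) (eta Z).

Definition is_module Z X : Prop :=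
  [/\ X \subset nodes Z,
      (exists! s, is_source (induced Z X) s),
      (forall v x r, v \in nodes Z -> v \notin X -> x \in X -> arc Z v x r ->
          is_source (induced Z X) x) &
      (forall v x r, v \in nodes Z -> v \notin X -> x \in X -> arc Z x v r ->
          forall x', x' \in X -> exists u, arc Z x' u r && ((u == v) || (u \in X)))].

End DecisionStructures.

(* Module contraction Z/H, on the ambient node type {set V}.  The node H is
   labelled by the derived action of Z[H] (computed from its source sH), each
   {v}, v notin H, by the label of v in Z. *)
Definition contract (W Sig : Type) (R : eqType) (V : finType)
    (Z : ds W Sig R V) (H : {set V}) (sH : V) : ds W Sig R {set V} :=
  let N := H |: [set [set v] | v in nodes Z :\: H] in
  DS N
     (fun S T r => [&& S \in N, T \in N, S != T &
                       [exists u in S, exists v in T, arc Z u v r]])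
     (fun T => if T == H then derived (induced Z H) sH
               else match [pick v in T] with
                    | Some v => eta Z v
                    | None => derived (induced Z H) sH
                    end).

From Pilot Require Import Defs.
From mathcomp Require Import all_boot.
From Stdlib Require Import Classical ClassicalEpsilon.
Set Implicit Arguments. Unset Strict Implicit. Unset Printing Implicit Defensive.

(* The evaluation of a decision structure is a
   walk that follows, from each node v, the arc labelled by the return value
   of v's action, and stops at the first node without such an arc; on a DAG
   it stops after fewer than #|V| steps.  Map every node v of Z to its class
   phi v in Z/H (H if v is in H, {v} otherwise).  By the module conditions
   the walk of Z enters H only at the source sH of Z[H]; from there it stays
   inside H exactly as the walk of Z[H] does, and either stops inside H or
   leaves H from the node y where the walk of Z[H] stops.  As the derived
   action of Z[H] coincides with the action of y at w, the arc of Z/H leaving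
   H is the class of the arc of Z leaving y.  Hence the walk of Z/H from the
   class of the source is the image under phi of the walk of Z with each
   sojourn in H compressed to one step, and both stop at actions with the
   same signal at w. *)

Section Walks.
Variables (W Sig : Type) (R : eqType) (V : finType) (Z : ds W Sig R V) (w : W).

Inductive stops_at : V -> V -> nat -> Prop :=
| stops_here v : Defs.next Z v w = None -> stops_at v v 0
| stops_later v u x k :
    Defs.next Z v w = Some u -> stops_at u x k -> stops_at v x k.+1.

Lemma run_stops_at v x k n : stops_at v x k -> k <= n -> run Z n v w = eta Z x.
Proof.
move=> E; elim: E n => [v0 Hn|v0 u x0 k0 Hn _ IH] [|n] //=; rewrite ?Hn //.
exact: IH.
Qed.

Lemma stops_at_terminal v x k : stops_at v x k -> Defs.next Z x w = None.
Proof. by elim. Qed.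

Lemma stops_at_here_inv v x k :
  stops_at v x k -> Defs.next Z v w = None -> x = v /\ k = 0.
Proof. by case=> [//|v0 u x0 k0 Hn _]; rewrite Hn. Qed.

Lemma stops_at_later_inv v x k u : stops_at v x k -> Defs.next Z v w = Some u ->
  exists k', k = k'.+1 /\ stops_at u x k'.
Proof. by case=> [v0 Hn|v0 u0 x0 k0 Hn E]; rewrite Hn // => -[<-]; exists k0. Qed.

Lemma next_arc v u : Defs.next Z v w = Some u -> Defs.arc Z v u ((eta Z v).2 w).
Proof. by rewrite /Defs.next; case: pickP => // y Hy [<-]. Qed.

Lemma next_None_arc v u : Defs.next Z v w = None -> ~~ Defs.arc Z v u ((eta Z v).2 w).
Proof. by rewrite /Defs.next; case: pickP => // /(_ u) ->. Qed.

Lemma next_None v : (forall u, ~~ Defs.arc Z v u ((eta Z v).2 w)) -> Defs.next Z v w = None.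
Proof. by move=> Hno; rewrite /Defs.next; case: pickP => // u; rewrite (negbTE (Hno u)). Qed.

Lemma next_Some v u : Defs.arc Z v u ((eta Z v).2 w) ->
  (forall u', Defs.arc Z v u' ((eta Z v).2 w) -> u' = u) -> Defs.next Z v w = Some u.
Proof.
move=> Ha Hu; rewrite /Defs.next; case: pickP => [y Hy|H0]; first by rewrite (Hu y Hy).
by rewrite H0 in Ha.
Qed.

(* Termination is measured by the (classically defined) set of nodes
   reachable from the current node, which shrinks along every arc of a DAG. *)
Definition reachable v : {set V} :=
  [set y | if excluded_middle_informative (reach Z v y) then true else false].

Lemma in_reachable v y : y \in reachable v <-> reach Z v y.
Proof. by rewrite inE; case: excluded_middle_informative. Qed.

Hypothesis acyclic : forall v, ~ reach Z v v.

Lemma reachable_arc v u r : Defs.arc Z v u r -> reachable u \proper reachable v.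
Proof.
move=> Ha; apply/properP; split.
  by apply/subsetP => y /in_reachable Hy; apply/in_reachable; exact: reach_step Ha Hy.
exists u; first by apply/in_reachable; exact: reach_one Ha.
by apply/negP => /in_reachable /acyclic.
Qed.

Lemma walk_stops v : exists x k, stops_at v x k /\ k < #|V|.
Proof.
have walk_bound u : exists x k, stops_at u x k /\ k <= #|reachable u|.
  have [n] := ubnP #|reachable u|; elim: n u => // n IH u Hn.
  case Hu: (Defs.next Z u w) => [u'|]; last by exists u, 0; split => //; exact: stops_here.
  have lt := proper_card (reachable_arc (next_arc Hu)).
  have [x [k [E Hk]]] := IH u' (leq_trans lt Hn).
  by exists x, k.+1; split; [exact: stops_later Hu E | exact: leq_ltn_trans Hk lt].
have [x [k [E Hk]]] := walk_bound v; exists x, k; split => //.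
apply: leq_ltn_trans Hk _; rewrite -cardsT; apply: proper_card.
rewrite properT; apply/eqP => Hall.
by move: (in_setT v); rewrite -Hall => /in_reachable /acyclic.
Qed.

End Walks.

(* In a decision structure every node other than the source has an incoming
   arc, since otherwise it would be a second source. *)
Lemma incoming_arc (W Sig : Type) (R : eqType) (V : finType) (Z : ds W Sig R V) s t :
  is_ds Z -> is_source Z s -> t \in nodes Z -> t <> s ->
  exists u r, Defs.arc Z u t r.
Proof.
case=> _ _ [s0 [_ Us]] _ _ Hs tN ts; apply: NNPP => Hno; apply: ts.
have Ht : is_source Z t by split => // u r; apply/negP => Ha; apply: Hno; exists u, r.
by rewrite -(Us _ Hs) -(Us _ Ht).
Qed.

Section Contraction.
Variables (W Sig : Type) (R : eqType) (V : finType).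
Variables (Z : ds W Sig R V) (H : {set V}) (sH : V).
Hypotheses (HZ : is_ds Z) (HH : is_module Z H) (HsH : is_source (induced Z H) sH).
Notation I := (induced Z H).
Notation C := (contract Z H sH).

Lemma arc_nodes u v r : Defs.arc Z u v r -> u \in nodes Z /\ v \in nodes Z.
Proof. by case: HZ => Hnodes _ _ _ _; exact: Hnodes. Qed.

Lemma arc_det u v v' r : Defs.arc Z u v r -> Defs.arc Z u v' r -> v = v'.
Proof. by case: HZ => _ _ _ _ Hdet; exact: Hdet. Qed.

Lemma arc_irrefl v r : ~~ Defs.arc Z v v r.
Proof. by apply/negP => Ha; case: HZ => _ Hacyc _ _ _; apply: (Hacyc v); exact: reach_one Ha. Qed.

Lemma module_nodes v : v \in H -> v \in nodes Z.
Proof. by case: HH => /subsetP HN _ _ _; exact: HN. Qed.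

Lemma sH_in : sH \in H.
Proof. by case: HsH => /setIP []. Qed.

Lemma induced_source_unique y : is_source I y -> y = sH.
Proof. by case: HH => _ [s1 [_ Us1]] _ _ Hy; rewrite -(Us1 _ Hy) (Us1 _ HsH). Qed.

Lemma module_entry v x r : Defs.arc Z v x r -> v \notin H -> x \in H -> x = sH.
Proof.
move=> Ha vH xH; apply: induced_source_unique.
by case: HH => _ _ Hentry _; apply: Hentry (arc_nodes Ha).1 vH xH Ha.
Qed.

Definition phi (v : V) : {set V} := if v \in H then H else [set v].

Lemma phi_mem v : v \in phi v.
Proof. by rewrite /phi; case: ifP => // _; exact: set11. Qed.

Lemma set1_neqH v : v \notin H -> ([set v] == H) = false.
Proof. by move=> vH; apply/eqP => E; move: (set11 v); rewrite E (negbTE vH). Qed.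

Lemma phi_node v : v \in nodes Z -> phi v \in nodes C.
Proof.
rewrite /= in_setU1 /phi => vN; case: ifP => [_|/negbT vH]; first by rewrite eqxx.
by apply/orP; right; apply/imsetP; exists v => //; apply/setDP.
Qed.

Lemma contract_node_phi T v : T \in nodes C -> v \in T -> T = phi v.
Proof.
rewrite /= in_setU1 => /orP [/eqP -> vH|/imsetP [t /setDP [_ tH] -> /set1P ->]].
  by rewrite /phi vH.
by rewrite /phi (negbTE tH).
Qed.

Lemma contract_node_rep T : T \in nodes C ->
  exists t, [/\ t \in nodes Z, t \in H -> t = sH & T = phi t].
Proof.
rewrite /= in_setU1 => /orP [/eqP ->|/imsetP [t /setDP [tN tH] ->]].
  by exists sH; split; rewrite ?module_nodes ?sH_in // /phi sH_in.
by exists t; split => // [tH'|]; [rewrite tH' in tH | rewrite /phi (negbTE tH)].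
Qed.

Lemma contract_eta_set1 v : v \notin H -> eta C [set v] = eta Z v.
Proof.
move=> vH /=; rewrite set1_neqH //.
by case: pickP => [y /set1P ->|/(_ v)]; rewrite ?set11.
Qed.

Lemma contract_eta_H : eta C H = derived I sH.
Proof. by rewrite /= eqxx. Qed.

Lemma contract_arc_phi u v r :
  Defs.arc Z u v r -> ~~ ((u \in H) && (v \in H)) -> Defs.arc C (phi u) (phi v) r.
Proof.
move=> Ha notHH; have [uN vN] := arc_nodes Ha.
apply/and4P; split; rewrite ?phi_node //.
  move: notHH; rewrite /phi; case: ifP => uH; case: ifP => vH //= _.
  - by rewrite eq_sym set1_neqH ?vH.
  - by rewrite set1_neqH ?uH.
  - by apply/eqP => /set1_inj evu; subst v; move: (arc_irrefl u r); rewrite Ha.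
by apply/existsP; exists u; rewrite phi_mem; apply/existsP; exists v; rewrite phi_mem Ha.
Qed.

(* Conversely an arc of Z/H leaving the class of v comes from an arc of Z
   leaving v itself: by module condition (ii) when v is in H. *)
Lemma contract_arc_lift v T r : v \in nodes Z -> Defs.arc C (phi v) T r ->
  exists v0, Defs.arc Z v v0 r /\ (T = phi v0 \/ (v \in H /\ v0 \in H)).
Proof.
move=> vN /and4P [_ TN neqT /existsP [u0 /andP [u0v /existsP [v0 /andP [v0T Ha]]]]].
rewrite (contract_node_phi TN v0T) in neqT *.
have [_ v0N] := arc_nodes Ha.
case vH: (v \in H); last first.
  by move: u0v; rewrite /phi vH => /set1P Eu0; subst u0; exists v0; split => //; left.
have v0H : v0 \notin H by apply/negP => v0H; move: neqT; rewrite /phi vH v0H eqxx.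
have u0H : u0 \in H by move: u0v; rewrite /phi vH.
case: HH => _ _ _ /(_ v0 u0 r v0N v0H u0H Ha v vH) [u /andP [Hu /orP [/eqP Eu|uH]]].
  by subst u; exists v0; split => //; left.
by exists u; split => //; right.
Qed.

Variable w : W.

Lemma contract_next v : v \in nodes Z -> (eta C (phi v)).2 w = (eta Z v).2 w ->
  (forall u, v \in H -> Defs.next Z v w = Some u -> u \notin H) ->
  Defs.next C (phi v) w = omap phi (Defs.next Z v w).
Proof.
move=> vN eR exitH; case Hn: (Defs.next Z v w) => [u|] /=.
  have Ha := next_arc Hn.
  apply: next_Some; rewrite eR.
    by apply: contract_arc_phi Ha _; apply/andP => -[vH uH]; move: (exitH u vH Hn); rewrite uH.
  move=> T /(contract_arc_lift vN) [v0 [Ha0 [->|[vH v0H]]]]; first by rewrite (arc_det Ha Ha0).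
  by move: (exitH u vH Hn); rewrite (arc_det Ha Ha0) v0H.
apply: next_None => T; apply/negP; rewrite eR => /(contract_arc_lift vN) [v0 [Ha0 _]].
by move: (next_None_arc v0 Hn); rewrite Ha0.
Qed.

Lemma next_induced v : v \in H ->
  Defs.next I v w = if Defs.next Z v w is Some u then
                      (if u \in H then Some u else None) else None.
Proof.
move=> vH; case Hn: (Defs.next Z v w) => [u|].
  have Ha := next_arc Hn; case: ifP => uH.
    apply: next_Some => [|u' /and3P [_ _ Ha']]; first by rewrite /= vH uH.
    exact: arc_det Ha' Ha.
  apply: next_None => u'; apply/negP => /and3P [_ u'H Ha'].
  by move: u'H; rewrite (arc_det Ha' Ha) uH.
apply: next_None => u'; apply/negP => /and3P [_ _ Ha'].
by move: (next_None_arc u' Hn); rewrite Ha'.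
Qed.

Lemma walk_leaves_H y x k : y \in H -> stops_at Z w y x k ->
  exists y' m, [/\ y' \in H, m <= k, stops_at I w y y' m & stops_at Z w y' x (k - m)].
Proof.
move=> yH E; elim: E yH => [v Hn|v u x0 k0 Hn E IH] vH.
  exists v, 0; split => //; last exact: stops_here.
  by apply: stops_here; rewrite next_induced // Hn.
case uH: (u \in H).
  have [y' [m [y'H mk EI E']]] := IH uH; exists y', m.+1; split => //.
  by apply: stops_later EI; rewrite next_induced // Hn uH.
exists v, 0; split; rewrite ?subn0 //; last exact: stops_later Hn E.
by apply: stops_here; rewrite next_induced // Hn uH.
Qed.

(* Entering a class: started at a node v where the walk of Z may enter
   phi v, the walk of Z reaches a node y (v itself, or the node where the walk
   of Z[H] stops) whose action agrees with the label of phi v at w, and the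
   next step of Z/H from phi v is the class of the next step of Z from y. *)
Lemma enter_class v x k : k < #|V| -> v \in nodes Z -> (v \in H -> v = sH) ->
  stops_at Z w v x k ->
  exists y m, [/\ stops_at Z w y x (k - m),
    (eta C (phi v)).1 w = (eta Z y).1 w,
    Defs.next C (phi v) w = omap phi (Defs.next Z y w) &
    forall u, Defs.next Z y w = Some u -> u \in H -> u = sH].
Proof.
move=> kV vN vsH E; case vH: (v \in H); last first.
  have vH' : v \notin H by rewrite vH.
  exists v, 0; split; rewrite ?subn0 //; first by rewrite /phi vH contract_eta_set1.
    have no_exit u : v \in H -> Defs.next Z v w = Some u -> u \notin H by rewrite vH.
    apply: contract_next vN _ no_exit.
    by rewrite /phi vH contract_eta_set1.
  by move=> u Hn; exact: module_entry (next_arc Hn) vH'.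
rewrite (vsH vH) in E *; have [y [m [yH mk EI Ey]]] := walk_leaves_H sH_in E.
have run_I : run I #|V| sH w = eta Z y by apply: run_stops_at EI (leq_trans mk (ltnW kV)).
have exitH u : Defs.next Z y w = Some u -> u \notin H.
  by move=> Hn; move: (stops_at_terminal EI); rewrite next_induced // Hn; case: (u \in H).
have phiH : phi sH = phi y by rewrite /phi sH_in yH.
exists y, m; split => //.
- by rewrite phiH /phi yH contract_eta_H /= /derivedB /out run_I.
- rewrite phiH; apply: contract_next (module_nodes yH) _ (fun u _ => exitH u).
  by rewrite /phi yH contract_eta_H /= /derivedR /out run_I.
- by move=> u /exitH /negbTE ->.
Qed.

Lemma simulate k v x : k < #|V| -> v \in nodes Z -> (v \in H -> v = sH) ->
  stops_at Z w v x k ->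
  exists X j, [/\ j <= k, stops_at C w (phi v) X j & (eta C X).1 w = (eta Z x).1 w].
Proof.
elim/ltn_ind: k v x => k IH v x kV vN vsH E.
have [y [m [Ey eB Cnext entry]]] := enter_class kV vN vsH E.
case Hn: (Defs.next Z y w) => [u|]; rewrite Hn /= in Cnext; last first.
  have [-> _] := stops_at_here_inv Ey Hn.
  by exists (phi v), 0; split => //; exact: stops_here.
have [k' [Ek Eu]] := stops_at_later_inv Ey Hn.
have k'k : k' < k by rewrite -Ek leq_subr.
have uN := (arc_nodes (next_arc Hn)).2.
have [X [j [jk' EC eX]]] := IH k' k'k u x (ltn_trans k'k kV) uN (entry u Hn) Eu.
by exists X, j.+1; split => //; [exact: leq_ltn_trans jk' k'k | exact: stops_later Cnext EC].
Qed.

Lemma source_entry s : is_source Z s -> s \in H -> s = sH.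
Proof.
move=> [sN noin] sH'; apply: induced_source_unique; split; first by apply/setIP.
by move=> u r; apply/negP => /and3P [_ _ Ha]; move/negP: (noin u r).
Qed.

(* The source of Z/H is the class of the source of Z: any other node of Z/H
   is the class of an entry node t different from s, and an arc of Z into t
   descends to an arc of Z/H. *)
Lemma contract_source s sQ : is_source Z s -> is_source C sQ -> sQ = phi s.
Proof.
move=> Hs [sQN noin]; have [t [tN tsH EsQ]] := contract_node_rep sQN; subst sQ.
have [-> //|/eqP ts] := eqVneq t s.
have [u [r Ha]] := incoming_arc HZ Hs tN ts.
exfalso; move/negP: (noin (phi u) r); apply; apply: (contract_arc_phi Ha).
apply/andP => -[uH /tsH Et]; subst t.
by case: HsH => _ /(_ u r) /negP; apply; rewrite /= uH sH_in Ha.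
Qed.

End Contraction.

Theorem mainTheorem15 (W Sig : Type) (R : eqType) (V : finType)
    (Z : ds W Sig R V) (H : {set V}) (s sH : V) (sQ : {set V}) :
  is_ds Z -> is_module Z H ->
  is_source Z s -> is_source (induced Z H) sH ->
  is_source (contract Z H sH) sQ ->
  forall w : W, derivedB Z s w = derivedB (contract Z H sH) sQ w.
Proof.
move=> HZ HH Hs HsH HsQ w.
have acyclic : forall v, ~ reach Z v v by case: HZ.
have [x [k [E kV]]] := walk_stops w acyclic s.
have sN : s \in nodes Z by case: Hs.
have [X [j [jk EC eX]]] := simulate HZ HH HsH kV sN (source_entry HH HsH Hs) E.
have card_sets : #|V| <= #|{set V}| by apply: (leq_card (@set1 V)); exact: set1_inj.
rewrite /derivedB /out (run_stops_at E (ltnW kV)) (contract_source HZ HH HsH Hs HsQ).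
by rewrite (run_stops_at EC (leq_trans jk (ltnW (leq_trans kV card_sets)))).
Qed.
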